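(* Let $\delta$ satisfy the Kalmanson conditions with respect to $\pi=(x_1,\dots,x_n)$, and let $i<x<y<z<j<t$ be indices in $\{1,\dots,n\}$. Writing $\delta_{ab}(c)=\delta(x_a,x_c)+\delta(x_b,x_c)-\delta(x_a,x_b)$, we have \[\delta_{xy}(z)+\delta_{xz}(y)+\delta_{yz}(x)+\delta_{xy}(t)+\delta_{xz}(t)+\delta_{yz}(t)\ \ge\ 3\delta_{ij}(t)+\delta_{ij}(x)+\delta_{ij}(y)+\delta_{ij}(z).\]
   Context: $X=\{1,\dots,n\}$. A dissimilarity map is $\delta:X\times X\to\mathbb{R}$ with $\delta(i,j)=\delta(j,i)\ge0$, $\delta(i,i)=0$. A circular ordering is a listing $\pi=(x_1,\dots,x_n)$ of $X$ regarded cyclically. $\delta$ satisfies the Kalmanson conditions with respect to $\pi$ if for all $1\le i<j<k<l\le n$: $\delta(x_i,x_j)+\delta(x_k,x_l)\le\delta(x_i,x_k)+\delta(x_j,x_l)$ and $\delta(x_i,x_l)+\delta(x_j,x_k)\le\delta(x_i,x_k)+\delta(x_j,x_l)$. *)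

From Stdlib Require Import Reals Lra Lia.
Open Scope R_scope.

(* A dissimilarity map on X = {1..n}: symmetric, nonnegative, zero diagonal
   (values outside X are irrelevant). *)
Definition dissimilarity (n : nat) (delta : nat -> nat -> R) : Prop :=
  (forall a b, (1 <= a <= n)%nat -> (1 <= b <= n)%nat ->
      delta a b = delta b a /\ 0 <= delta a b) /\
  (forall a, (1 <= a <= n)%nat -> delta a a = 0).

(* A circular ordering pi = (x_1,...,x_n): a listing of X, i.e. a bijection
   of {1..n} onto itself, position k |-> x_k. *)
Definition circular_ordering (n : nat) (pi : nat -> nat) : Prop :=
  (forall k, (1 <= k <= n)%nat -> (1 <= pi k <= n)%nat) /\
  (forall k l, (1 <= k <= n)%nat -> (1 <= l <= n)%nat -> pi k = pi l -> k = l).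

Definition kalmanson (n : nat) (delta : nat -> nat -> R) (pi : nat -> nat) : Prop :=
  forall i j k l : nat, (1 <= i)%nat -> (i < j)%nat -> (j < k)%nat -> (k < l)%nat ->
    (l <= n)%nat ->
    delta (pi i) (pi j) + delta (pi k) (pi l) <= delta (pi i) (pi k) + delta (pi j) (pi l) /\
    delta (pi i) (pi l) + delta (pi j) (pi k) <= delta (pi i) (pi k) + delta (pi j) (pi l).

Definition dab (delta : nat -> nat -> R) (pi : nat -> nat) (a b c : nat) : R :=
  delta (pi a) (pi c) + delta (pi b) (pi c) - delta (pi a) (pi b).

From Stdlib Require Import Reals Lra Lia.
Open Scope R_scope.

(* By symmetry of delta the left-hand side collapses to
   2 (delta(x_x,x_t) + delta(x_y,x_t) + delta(x_z,x_t)).  For each w among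
   x, y, z the two Kalmanson inequalities of the quadruple i < w < j < t add
   up to delta_ij(w) + delta_ij(t) <= 2 delta(x_w,x_t); summing over w gives
   the claim. *)

Section Kalmanson.

Variables (n : nat) (delta : nat -> nat -> R) (pi : nat -> nat).
Hypotheses (Hdiss : dissimilarity n delta) (Hpi : circular_ordering n pi).

Lemma delta_pi_sym (a b : nat) :
  (1 <= a <= n)%nat -> (1 <= b <= n)%nat ->
  delta (pi a) (pi b) = delta (pi b) (pi a).
Proof.
  intros Ha Hb.
  destruct Hdiss as [Hsym _]; destruct Hpi as [Hrange _].
  exact (proj1 (Hsym _ _ (Hrange a Ha) (Hrange b Hb))).
Qed.

Lemma dab_six_sum (x y z t : nat) :
  (1 <= x <= n)%nat -> (1 <= y <= n)%nat -> (1 <= z <= n)%nat ->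
  dab delta pi x y z + dab delta pi x z y + dab delta pi y z x
  + dab delta pi x y t + dab delta pi x z t + dab delta pi y z t
  = 2 * (delta (pi x) (pi t) + delta (pi y) (pi t) + delta (pi z) (pi t)).
Proof.
  intros Hx Hy Hz; unfold dab.
  rewrite (delta_pi_sym y x), (delta_pi_sym z x), (delta_pi_sym z y) by lia.
  ring.
Qed.

Hypothesis Hkal : kalmanson n delta pi.

Lemma dab_add_le_twice (i w j t : nat) :
  (1 <= i)%nat -> (i < w)%nat -> (w < j)%nat -> (j < t)%nat -> (t <= n)%nat ->
  dab delta pi i j w + dab delta pi i j t <= 2 * delta (pi w) (pi t).
Proof.
  intros Hi Hiw Hwj Hjt Htn; unfold dab.
  destruct (Hkal i w j t Hi Hiw Hwj Hjt Htn) as [Hcross Hnest].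
  rewrite (delta_pi_sym j w) by lia.
  lra.
Qed.

End Kalmanson.

Theorem mainTheorem9 (n : nat) (delta : nat -> nat -> R) (pi : nat -> nat)
  (i x y z j t : nat) :
  dissimilarity n delta ->
  circular_ordering n pi ->
  kalmanson n delta pi ->
  (1 <= i)%nat -> (i < x)%nat -> (x < y)%nat -> (y < z)%nat -> (z < j)%nat ->
  (j < t)%nat -> (t <= n)%nat ->
  dab delta pi x y z + dab delta pi x z y + dab delta pi y z x
  + dab delta pi x y t + dab delta pi x z t + dab delta pi y z t
  >= 3 * dab delta pi i j t + dab delta pi i j x + dab delta pi i j y
     + dab delta pi i j z.
Proof.
  intros Hdiss Hpi Hkal Hi Hix Hxy Hyz Hzj Hjt Htn.
  rewrite (dab_six_sum n delta pi Hdiss Hpi x y z t) by lia.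
  pose proof (dab_add_le_twice n delta pi Hdiss Hpi Hkal i x j t
                ltac:(lia) ltac:(lia) ltac:(lia) ltac:(lia) ltac:(lia)).
  pose proof (dab_add_le_twice n delta pi Hdiss Hpi Hkal i y j t
                ltac:(lia) ltac:(lia) ltac:(lia) ltac:(lia) ltac:(lia)).
  pose proof (dab_add_le_twice n delta pi Hdiss Hpi Hkal i z j t
                ltac:(lia) ltac:(lia) ltac:(lia) ltac:(lia) ltac:(lia)).
  lra.
Qed.
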